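(* Let $r>0$ be a fixed real number. If $P$ is a finite poset having an interval representation in which every interval is closed and has length $0$ or $r$, then $\dim(P) \le 3$.
   Context: Posets are finite and reflexive. An interval representation of a poset $P$ assigns to each element $x$ a closed bounded interval $[\ell(x), r(x)]$ (possibly degenerate, of length $0$) such that for distinct $x,y$, $x<y$ in $P$ if and only if $r(x)<\ell(y)$. The dimension $\dim(P)$ is the minimum number of linear extensions of $P$ whose intersection is $P$. *)

From HB Require Import structures.
From mathcomp Require Import all_boot all_order all_algebra.
From mathcomp Require Import reals.
Set Implicit Arguments. Unset Strict Implicit. Unset Printing Implicit Defensive.
Import Order.TTheory GRing.Theory Num.Theory.
Local Open Scope ring_scope.

Definition linear_extension (d : Order.disp_t) (P : finPOrderType d)
  (L : rel P) : Prop :=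
  [/\ reflexive L, antisymmetric L, transitive L,
      total L & forall x y : P, (x <= y)%O -> L x y].

Definition realizer (d : Order.disp_t) (P : finPOrderType d) (t : nat)
  (L : 'I_t -> rel P) : Prop :=
  (forall i, linear_extension (L i)) /\
  (forall x y : P, (x <= y)%O = [forall i, L i x y]).

Definition dim_le (d : Order.disp_t) (P : finPOrderType d) (k : nat) : Prop :=
  exists t : nat, (t <= k)%N /\ exists L : 'I_t -> rel P, realizer L.

Definition interval_rep (R : realType) (d : Order.disp_t) (P : finPOrderType d)
  (lft rgt : P -> R) : Prop :=
  (forall x, lft x <= rgt x) /\
  (forall x y : P, x != y -> ((x < y)%O <-> rgt x < lft y)).

From HB Require Import structures.
From mathcomp Require Import all_boot all_order all_algebra.
From mathcomp Require Import reals.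
From mathcomp Require Import zify lra.
Import Order.TTheory GRing.Theory Num.Theory.
Set Implicit Arguments. Unset Strict Implicit. Unset Printing Implicit Defensive.
Local Open Scope ring_scope.

(* Dividing by r, the poset becomes an interval order in which element x is
   the interval [u x, u x + len x] with len x in {0, 1}; for distinct x, y,
   x < y iff u x + len x < u y (relation [prec]).  Write u x = cell x + frac x
   with cell x = floor (u x).  Three linear extensions realize the order:
   - for s in {0, 1}, cut the line into windows [2m - s, 2m - s + 2) of two
     consecutive cells; inside a window list first the points of the lower
     cell by frac, then all other elements by frac (ties: upper intervals,
     upper points, lower intervals);
   - cell by cell, list first the points by increasing frac, then the unit
     intervals by decreasing frac.
   Every extension is induced by an injective key into the lexicographic order
   R * nat * 'I_#|T|, the last coordinate (enumeration rank, reversed in the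
   third key) breaking all remaining ties.  The file first shows that injective
   strictly monotone keys yield linear extensions and realizers (as soon as
   every incomparable pair is reversed by some key), then analyses the unit
   interval model: the keys respect [prec], and every pair of distinct
   overlapping elements is reversed by one of them. *)

Section KeyRealizer.
Variables (d : Order.disp_t) (P : finPOrderType d).
Variables (dk : Order.disp_t) (K : orderType dk).

Definition key_rel (key : P -> K) : rel P := fun x y => (key x <= key y)%O.

Lemma key_linear_extension (key : P -> K) :
  injective key -> {homo key : x y / (x < y)%O} -> linear_extension (key_rel key).
Proof.
move=> key_inj key_mono; split.
- by move=> x; exact: le_refl.
- by move=> x y /le_anti; exact: key_inj.
- by move=> y x z; exact: le_trans.
- by move=> x y; exact: le_total.
- move=> x y; rewrite le_eqVlt => /predU1P[-> | /key_mono/ltW //].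
  exact: le_refl.
Qed.

Lemma key_realizer (t : nat) (key : 'I_t -> P -> K) (i0 : 'I_t) :
  (forall i, injective (key i)) -> (forall i, {homo key i : x y / (x < y)%O}) ->
  (forall x y : P, (x >< y)%O -> exists i, (key i y < key i x)%O) ->
  realizer (fun i => key_rel (key i)).
Proof.
move=> key_inj key_mono reversed.
have ext i : linear_extension (key_rel (key i)) by exact: key_linear_extension.
split=> // x y; apply/idP/forallP => [le_xy i|all_le]; first by case: (ext i) => _ _ _ _; apply.
case/boolP: (x >=< y)%O => [cmp|inc]; last first.
  by have [i lt_yx] := reversed x y inc; move: (all_le i); rewrite /key_rel lt_geF.
case/comparable_leP: cmp => [// | lt_yx].
by move: (all_le i0); rewrite /key_rel lt_geF // key_mono.
Qed.

End KeyRealizer.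

Section UnitIntervalModel.
Variables (R : realType) (T : finType) (u : T -> R) (t : T -> bool).

(* Element x is the interval [u x, u x + len x], of length 0 or 1. *)
Definition len x : R := (t x)%:R.
Definition prec x y : bool := u x + len x < u y.

Definition cell x : int := Num.floor (u x).
Definition frac x : R := u x - (cell x)%:~R.

Lemma frac_ge0 x : 0 <= frac x.
Proof. by rewrite /frac subr_ge0 /cell floor_le. Qed.

Lemma frac_lt1 x : frac x < 1.
Proof. by have := floorD1_gt (u x); rewrite intrD /frac /cell; lra. Qed.

Lemma frac_bounds x y :
  [/\ 0 <= frac x, frac x < 1, 0 <= frac y & frac y < 1].
Proof. by split; [exact: frac_ge0 | exact: frac_lt1 | exact: frac_ge0 | exact: frac_lt1]. Qed.

Lemma u_cell_frac x : u x = (cell x)%:~R + frac x.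
Proof. by rewrite /frac addrC subrK. Qed.

Lemma len_if x : len x = if t x then 1 else 0.
Proof. by rewrite /len; case: (t x). Qed.

Lemma prec_cells x y : prec x y ->
  [/\ cell x <= cell y,
      (cell x = cell y -> ~~ t x /\ frac x < frac y) &
      (cell y = cell x + 1 -> t x -> frac x < frac y)].
Proof.
rewrite /prec (u_cell_frac x) (u_cell_frac y) len_if => lt_xy.
have [fx0 fx1 fy0 fy1] := frac_bounds x y; split.
- have : cell x < cell y + 1 by rewrite -(ltr_int R) intrD; case: (t x) lt_xy; lra.
  lia.
- by move=> e; rewrite e in lt_xy; case: (t x) lt_xy => lt_xy; split => //; lra.
- by move=> e tx; rewrite e intrD tx in lt_xy; lra.
Qed.

Lemma not_prec_cells x y : ~~ prec x y ->
  [/\ cell y <= cell x + 1,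
      (cell y = cell x + 1 -> t x /\ frac y <= frac x) &
      (cell x = cell y -> ~~ t x -> frac y <= frac x)].
Proof.
rewrite /prec -leNgt (u_cell_frac x) (u_cell_frac y) len_if => le_yx.
have [fx0 fx1 fy0 fy1] := frac_bounds x y; split.
- have : cell y < cell x + 2 by rewrite -(ltr_int R) intrD; case: (t x) le_yx; lra.
  lia.
- by move=> e; rewrite e intrD in le_yx; case: (t x) le_yx => le_yx; split => //; lra.
- by move=> e /negbTE tx; rewrite e tx in le_yx; lra.
Qed.

(* For a shift s, [window s x] is the even integer cell x + s rounded down;
   [parity s x] is 0 in the lower cell of the window and 1 in the upper one. *)
Definition parity (s : bool) x : int := ((cell x + s%:Z) %% 2)%Z.
Definition window (s : bool) x : int := cell x + s%:Z - parity s x.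

Lemma parity_choice x (b : int) : b = 0 \/ b = 1 -> exists s, parity s x = b.
Proof.
move=> b01; case: (eqVneq (parity false x) b) => [|ne]; first by exists false.
by exists true; move: ne; rewrite /parity /=; lia.
Qed.

Lemma window_cases s x y : cell x <= cell y ->
  window s x + 2 <= window s y \/
  window s x = window s y /\ cell x = cell y \/
  window s x = window s y /\ cell y = cell x + 1 /\
    parity s x = 0 /\ parity s y = 1.
Proof. rewrite /window /parity; lia. Qed.

Lemma window_next s x y : cell y = cell x + 1 -> parity s x = 0 ->
  parity s y = 1 /\ window s x = window s y.
Proof. rewrite /window /parity; lia. Qed.

Definition window_pos s x : R := 4 * (window s x)%:~R +
  (if (parity s x == 0) && ~~ t x then frac x else 2 + frac x).
Definition window_tie s x : nat :=
  if parity s x == 0 then 2 else if t x then 0 else 1.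
Definition cell_pos x : R :=
  4 * (cell x)%:~R + (if t x then 3 - frac x else frac x).

Definition Key := (R *l (nat *l 'I_#|T|))%type.
Definition window_key s x : Key := (window_pos s x, (window_tie s x, enum_rank x)).
Definition cell_key x : Key := (cell_pos x, (0%N, rev_ord (enum_rank x))).
Definition key (i : 'I_3) : T -> Key :=
  match val i with 0 => window_key false | 1 => window_key true | _ => cell_key end.

(* The rank coordinate makes every key injective. *)
Lemma key_inj i : injective (key i).
Proof.
rewrite /key; case: (val i) => [|[|_]] x y /(congr1 (fun k : Key => k.2.2)) /=;
  [exact: enum_rank_inj | exact: enum_rank_inj | move/rev_ord_inj; exact: enum_rank_inj].
Qed.

Lemma window_pos_prec s x y : prec x y -> window_pos s x < window_pos s y.
Proof.
move=> /prec_cells[le_cell same_cell next_cell].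
have [fx0 fx1 fy0 fy1] := frac_bounds x y; rewrite /window_pos.
case: (window_cases s le_cell) => [far|[[ew ec]|[ew [ec [px py]]]]].
- have : ((window s x + 2)%:~R : R) <= (window s y)%:~R by rewrite ler_int.
  by rewrite intrD; case: ifP => _; case: ifP => _; lra.
- have [/negbTE tx lt_frac] := same_cell ec.
  by rewrite ew /parity ec tx; case: (_ == 0); case: (t y) => /=; lra.
- rewrite ew px py /=; case tx: (t x) => /=; last lra.
  by have := next_cell ec tx; lra.
Qed.

Lemma cell_pos_prec x y : prec x y -> cell_pos x < cell_pos y.
Proof.
move=> /prec_cells[le_cell same_cell _].
have [fx0 fx1 fy0 fy1] := frac_bounds x y; rewrite /cell_pos.
have [ec|ne_cell] := eqVneq (cell x) (cell y).
- have [/negbTE tx lt_frac] := same_cell ec.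
  by rewrite ec tx; case: (t y); lra.
- have : ((cell x + 1)%:~R : R) <= (cell y)%:~R.
    by rewrite ler_int lezD1 lt_neqAle ne_cell le_cell.
  by rewrite intrD; case: (t x); case: (t y); lra.
Qed.

Lemma key_lt_pos (a b : R) (p q : nat *l 'I_#|T|) :
  a < b -> ((a, p) < (b, q) :> Key)%O.
Proof. by move=> lt_ab; rewrite ltxi_pair (ltW lt_ab) lt_geF. Qed.

Lemma key_lt_tie (a : R) (m n : nat) (k l : 'I_#|T|) :
  (m < n)%N -> ((a, (m, k)) < (a, (n, l)) :> Key)%O.
Proof. by move=> lt_mn; rewrite ltxi_pair !lexx ltxi_pair !leEnat (ltnW lt_mn) leqNgt lt_mn. Qed.

Lemma key_lt_rank (a : R) (m : nat) (k l : 'I_#|T|) :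
  (k < l)%N -> ((a, (m, k)) < (a, (m, l)) :> Key)%O.
Proof. by move=> lt_kl; rewrite ltxi_pair !lexx ltxi_pair !lexx. Qed.

Lemma key_prec i x y : prec x y -> (key i x < key i y)%O.
Proof.
move=> xy; rewrite /key.
by case: (val i) => [|[|_]]; apply: key_lt_pos;
  [exact: window_pos_prec | exact: window_pos_prec | exact: cell_pos_prec].
Qed.

Lemma window_key_reverses s x y : (window_key s y < window_key s x)%O ->
  exists i, (key i y < key i x)%O.
Proof. by case: s => lt_yx; [exists (@Ordinal 3 1 isT) | exists (@Ordinal 3 0 isT)]. Qed.

Lemma cell_key_reverses x y : (cell_key y < cell_key x)%O ->
  exists i, (key i y < key i x)%O.
Proof. by exists (@Ordinal 3 2 isT). Qed.

(* Distinct elements with equal data are separated by the rank, which the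
   window keys and the cell key compare in opposite directions. *)
Lemma twins_reversed x y : x != y ->
  cell x = cell y -> t x = t y -> frac x = frac y ->
  exists i, (key i y < key i x)%O.
Proof.
move=> ne ec et ef.
case: (ltngtP (enum_rank x) (enum_rank y)) => [lt|gt|/val_inj/enum_rank_inj e].
- apply: cell_key_reverses; rewrite /cell_key /cell_pos ec et ef.
  by apply: key_lt_rank; rewrite /= ltn_sub2lE ?ltnS ?ltn_ord.
- apply: (@window_key_reverses false).
  rewrite /window_key /window_pos /window_tie /window /parity ec et ef.
  exact: key_lt_rank.
- by rewrite e eqxx in ne.
Qed.

(* An element x overlapping y from the previous cell: take the window whose
   lower cell is that of x. *)
Lemma next_cell_reversed x y : cell y = cell x + 1 -> t x -> frac y <= frac x ->
  exists i, (key i y < key i x)%O.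
Proof.
move=> ec tx le_frac.
have [s px] := parity_choice x (or_introl (erefl (0 : int))).
have [py ew] := window_next ec px.
apply: (@window_key_reverses s).
have [lt_frac|ef] : frac y < frac x \/ frac y = frac x by lra.
- by apply: key_lt_pos; rewrite /window_pos ew px py tx /=; lra.
- rewrite /window_key /window_pos ew px py tx ef /=.
  by apply: key_lt_tie; rewrite /window_tie px py /=; case: (t y).
Qed.

Lemma same_cell_reversed x y : x != y -> cell x = cell y ->
  ~~ prec x y -> ~~ prec y x -> exists i, (key i y < key i x)%O.
Proof.
move=> ne ec /not_prec_cells[_ _ yx] /not_prec_cells[_ _ xy].
have [fx0 fx1 fy0 fy1] := frac_bounds x y.
case tx: (t x); case ty: (t y).
- have [lt_frac|[gt_frac|ef]] :
    frac y < frac x \/ frac x < frac y \/ frac x = frac y by lra.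
  + apply: (@window_key_reverses false); apply: key_lt_pos.
    by rewrite /window_pos /window /parity ec tx ty /= andbF; lra.
  + by apply: cell_key_reverses; apply: key_lt_pos; rewrite /cell_pos ec tx ty; lra.
  + by apply: twins_reversed => //; rewrite tx ty.
- by apply: cell_key_reverses; apply: key_lt_pos; rewrite /cell_pos ec tx ty; lra.
- have le_frac : frac y <= frac x by apply: yx => //; rewrite tx.
  have [s px] := parity_choice x (or_intror (erefl (1 : int))).
  have py : parity s y = 1 by rewrite /parity -ec.
  have ew : window s x = window s y by rewrite /window px py ec.
  apply: (@window_key_reverses s).
  have [lt_frac|ef] : frac y < frac x \/ frac y = frac x by lra.
  + by apply: key_lt_pos; rewrite /window_pos ew px py tx ty /=; lra.
  + rewrite /window_key /window_pos ew px py tx ty ef /=.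
    by apply: key_lt_tie; rewrite /window_tie px py tx ty.
- have le1 : frac y <= frac x by apply: yx => //; rewrite tx.
  have le2 : frac x <= frac y by apply: xy => //; rewrite ty.
  by apply: twins_reversed => //; [rewrite tx ty | lra].
Qed.

Lemma key_reverses x y : x != y -> ~~ prec x y -> ~~ prec y x ->
  exists i, (key i y < key i x)%O.
Proof.
move=> ne xy yx.
have [le_y next_y _] := not_prec_cells xy.
have [le_x next_x _] := not_prec_cells yx.
have [ec|[ec|ec]] : cell y = cell x + 1 \/ cell x = cell y + 1 \/ cell x = cell y by lia.
- by have [tx le_frac] := next_y ec; exact: next_cell_reversed.
- have [ty _] := next_x ec.
  have [fx0 fx1 fy0 _] := frac_bounds x y.
  apply: cell_key_reverses; apply: key_lt_pos; rewrite /cell_pos ec intrD ty.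
  by case: (t x); lra.
- exact: same_cell_reversed.
Qed.

End UnitIntervalModel.

Lemma scaled_prec (R : realType) (r : R) (T : Type) (lft rgt : T -> R) :
  0 < r -> (forall x, rgt x - lft x = 0 \/ rgt x - lft x = r) ->
  forall x y, (rgt x < lft y) =
    (lft x / r + (rgt x != lft x)%:R < lft y / r).
Proof.
move=> r_gt0 lengths x y.
have -> : lft x / r + (rgt x != lft x)%:R = rgt x / r.
  case: (lengths x) => e.
    have -> : rgt x = lft x by lra.
    by rewrite eqxx addr0.
  have -> : rgt x = lft x + r by lra.
  have -> : (lft x + r != lft x) = true by apply/eqP; lra.
  by rewrite mulrDl divff ?gt_eqF.
by rewrite ltr_pM2r ?invr_gt0.
Qed.

Theorem mainTheorem7 (R : realType) (r : R) (hr : 0 < r)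
  (d : Order.disp_t) (P : finPOrderType d) (lft rgt : P -> R) :
  interval_rep lft rgt ->
  (forall x : P, rgt x - lft x = 0 \/ rgt x - lft x = r) ->
  dim_le P 3.
Proof.
move=> [_ rep] lengths.
pose u x := lft x / r; pose t x := rgt x != lft x.
have lt_prec x y : (x < y)%O = prec u t x y.
  case: (eqVneq x y) => [->|ne]; first by rewrite ltxx /prec len_if; case: (t y); lra.
  by rewrite /prec /len -(scaled_prec hr lengths); apply/idP/idP => /(rep x y ne).
exists 3; split => //; exists (fun i => key_rel (key u t i)).
apply: (key_realizer ord0) => [i|i x y|x y inc]; first exact: key_inj.
  by rewrite lt_prec; exact: key_prec.
apply: key_reverses; first by rewrite incomparable_eqF.
  by rewrite -lt_prec incomparable_ltF.
by rewrite -lt_prec incomparable_ltF // comparable_sym.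
Qed.
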